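(* Let $(U,\|\cdot\|)$ be a uniformly convex Banach space and let $Q\subseteq U$ be a nonempty, bounded, closed, convex set. Let $r>0$ and let $\{\beta_n\}_{n\in\mathbb{N}}$ be a sequence of positive real numbers with $\lim_{n\to\infty}\beta_n=1$. Suppose $T:Q\to Q$ satisfies: for all $p,q\in Q$ with $\|p-q\|<r$, $$\|T^np-T^nq\|\leq \beta_n\|p-q\|\quad\text{for every } n\in\mathbb{N}.$$ If there exists $q_0\in Q$ such that the asymptotic radius of the sequence $\{T^nq_0\}_n$ relative to $Q$ is less than $r$, then $T$ has a fixed point. Furthermore, the set of fixed points of $T$ is closed.
   Context: A map $T$ as in the statement is called uniformly local asymptotic nonexpansive. For a bounded sequence $\{x_n\}_n$ in $U$, its asymptotic radius relative to $Q$ is $\rho=\inf_{y\in Q}\limsup_{n\to\infty}\|x_n-y\|$. *)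

From HB Require Import structures.
From mathcomp Require Import all_boot all_order all_algebra.
From mathcomp Require Import all_classical all_reals all_analysis.
Set Implicit Arguments. Unset Strict Implicit. Unset Printing Implicit Defensive.
Import Order.TTheory GRing.Theory Num.Theory.
Import numFieldNormedType.Exports.
Local Open Scope classical_set_scope.
Local Open Scope ring_scope.

Definition uniformly_convex (R : realType) (U : normedModType R) : Prop :=
  forall eps : R, 0 < eps -> eps <= 2 ->
    exists2 delta : R, 0 < delta &
      forall x y : U, `|x| <= 1 -> `|y| <= 1 -> eps <= `|x - y| ->
        `|(2^-1) *: (x + y)| <= 1 - delta.

Definition bounded_set_norm (R : realType) (U : normedModType R) (Q : set U) : Prop :=
  exists M : R, forall x, Q x -> `|x| <= M.

Definition convex_set_in (R : realType) (U : normedModType R) (Q : set U) : Prop :=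
  forall x y t, Q x -> Q y -> 0 <= t -> t <= 1 -> Q (t *: x + (1 - t) *: y).

Definition asymptotic_radius (R : realType) (U : normedModType R)
  (Q : set U) (x : nat -> U) : \bar R :=
  ereal_inf [set limn_esup (fun n => (`|x n - y|)%:E) | y in Q].

From HB Require Import structures.
From mathcomp Require Import all_boot all_order all_algebra.
From mathcomp Require Import all_classical all_reals all_analysis.
From mathcomp Require Import lra.
Import Order.TTheory GRing.Theory Num.Theory.
Import numFieldNormedType.Exports.
Local Open Scope classical_set_scope.
Local Open Scope ring_scope.

(* The orbit x_n = T^n q0 has an asymptotic center z in Q: by uniform
   convexity, two points of Q that are almost optimal for the asymptotic
   radius rho are close to each other (otherwise their midpoint would beat
   rho), so a minimizing sequence is Cauchy.  Since rho < r, the iterate T^m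
   is beta_m-Lipschitz on the relevant scale, so T^m z is almost optimal as
   soon as beta_m is close to 1; hence T^m z -> z, and as T is locally
   Lipschitz on Q this forces T z = z.  The same local Lipschitz property
   makes the fixed-point set closed. *)

Lemma near_infty_addn (P : set nat) m :
  (\forall n \near \oo, P (n + m)%N) -> \forall n \near \oo, P n.
Proof.
elim: m P => [|m IHm] P; first by apply: filterS => n; rewrite addn0.
move=> PSm; apply: near_inftyS; apply: (IHm (P \o succn)).
by apply: filterS PSm => n; rewrite /= addnS.
Qed.

Section NormedSpaceGeometry.
Context {R : realType} {U : normedModType R}.

Lemma convex_set_in_midpoint (Q : set U) a b :
  convex_set_in Q -> Q a -> Q b -> Q (2^-1 *: (a + b)).
Proof.
move=> CV Qa Qb; have := CV a b 2^-1 Qa Qb; rewrite scalerDr.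
have -> : 1 - 2^-1 = 2^-1 :> R by lra.
by apply; lra.
Qed.

Lemma uniformly_convex_midpoint (eps : R) :
  uniformly_convex U -> 0 < eps -> eps <= 2 ->
  exists2 delta : R, 0 < delta & forall (d : R) (p a b : U), 0 < d ->
    `|p - a| <= d -> `|p - b| <= d -> eps * d <= `|a - b| ->
    `|p - 2^-1 *: (a + b)| <= (1 - delta) * d.
Proof.
move=> UC eps0 eps2; have [delta delta0 Hdelta] := UC eps eps0 eps2.
exists delta => // d p a b d0 pa pb ab.
have dV0 : 0 <= d^-1 by rewrite invr_ge0 ltW.
have normZ (v : U) : `|d^-1 *: v| = d^-1 * `|v| by rewrite normrZ ger0_norm.
have midE : 2^-1 *: (d^-1 *: (p - a) + d^-1 *: (p - b))
    = d^-1 *: (p - 2^-1 *: (a + b)).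
  rewrite -scalerDr !scalerA mulrC -!scalerA; congr (_ *: _).
  rewrite addrACA -opprD scalerBr; congr (_ - _).
  by rewrite scalerDr -scalerDl -div1r -splitr scale1r.
have diffE : d^-1 *: (p - a) - d^-1 *: (p - b) = d^-1 *: (b - a).
  by rewrite -scalerBr opprB addrC addrA subrK.
have := Hdelta (d^-1 *: (p - a)) (d^-1 *: (p - b)).
rewrite midE diffE !normZ !ler_pdivrMl // mulr1 [`|b - a|]distrC => /(_ pa pb).
by rewrite [d * _]mulrC; apply; rewrite ler_pdivlMl // mulrC.
Qed.

End NormedSpaceGeometry.

Section AsymptoticRadius.
Context {R : realType} {U : normedModType R} (Q : set U) (x : nat -> U).

Definition asymptotic_bounds : set R :=
  [set c | exists2 y, Q y & \forall n \near \oo, `|x n - y| <= c].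

Definition asymptotic_radiusR : R := inf asymptotic_bounds.
Local Notation rho := asymptotic_radiusR.

Definition almost_center (e : R) (y : U) : Prop :=
  \forall n \near \oo, `|x n - y| <= rho + e.

Lemma asymptotic_bound_ge0 c : asymptotic_bounds c -> 0 <= c.
Proof. by move=> [y _ /filter_ex [n]]; apply: le_trans. Qed.

Lemma asymptotic_bounds_has_lbound : has_lbound asymptotic_bounds.
Proof. by exists 0 => c /asymptotic_bound_ge0. Qed.

Lemma asymptotic_radiusR_le c : asymptotic_bounds c -> rho <= c.
Proof. exact: ge_inf asymptotic_bounds_has_lbound c. Qed.

Lemma asymptotic_radius_lt c : (asymptotic_radius Q x < c%:E)%E ->
  exists2 c', asymptotic_bounds c' & c' < c.
Proof.
move=> /ereal_inf_lt [_ [y Qy <-]] /ereal_inf_lt [_ [V [N _ NV] <-]].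
set s := ereal_sup _ => sc.
have le_s n : (N <= n)%N -> (`|x n - y|%:E <= s)%E.
  by move=> Nn; apply: ereal_sup_ubound; exists n => //; apply: NV.
have s_fin : s \is a fin_num.
  by rewrite ge0_fin_numE ?(lt_trans sc) ?ltry // (le_trans _ (le_s N _)).
exists (fine s); last by rewrite -lte_fin fineK.
exists y => //; exists N => // n /le_s.
by rewrite -lee_fin fineK.
Qed.

Lemma almost_center_le e e' y :
  e <= e' -> almost_center e y -> almost_center e' y.
Proof. by move=> ee'; apply: filterS => n /le_trans; apply; rewrite lerD2l. Qed.

(* Otherwise [inf] returns the junk value 0. *)
Hypothesis bounds_nonempty : asymptotic_bounds !=set0.

Lemma asymptotic_radiusR_ge0 : 0 <= rho.
Proof. exact: lb_le_inf bounds_nonempty asymptotic_bound_ge0. Qed.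

Lemma almost_center_exists e : 0 < e -> exists2 y, Q y & almost_center e y.
Proof.
move=> e0; have [c [y Qy yc] ce] :=
  inf_adherent e0 (conj bounds_nonempty asymptotic_bounds_has_lbound).
by exists y => //; apply: filterS yc => n /le_trans; apply; apply: ltW.
Qed.

Lemma almost_centers_close (eps : R) : uniformly_convex U -> convex_set_in Q ->
  0 < eps -> exists2 eta, 0 < eta & forall a b, Q a -> Q b ->
    almost_center eta a -> almost_center eta b -> `|a - b| <= eps.
Proof.
move=> UC CV eps0; have rho0 := asymptotic_radiusR_ge0.
set eps' := Num.min (eps / (rho + 1)) 2.
have eps'0 : 0 < eps' by rewrite lt_min divr_gt0 //=; lra.
have [eps'_le eps'2] : eps' <= eps / (rho + 1) /\ eps' <= 2.
  by rewrite !ge_min !lexx orbT.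
have [delta delta0 mid] := uniformly_convex_midpoint eps' UC eps'0 eps'2.
set eta := Num.min (Num.min 1 (eps / 4)) (eps * delta / 8).
have eta0 : 0 < eta by rewrite !lt_min ltr01 /= !divr_gt0 ?mulr_gt0.
have [eta1 eta_eps eta_delta] :
    [/\ eta <= 1, eta <= eps / 4 & eta <= eps * delta / 8].
  by rewrite !ge_min !lexx !orbT.
exists eta => // a b Qa Qb aC bC; rewrite leNgt; apply/negP => ab.
have [n [xa xb]] := filter_ex (filterI aC bC).
have rho_big : eps / 4 <= rho.
  by have := ler_distD (x n) a b; rewrite [`|a - x n|]distrC; lra.
have : asymptotic_bounds ((1 - delta) * (rho + eta)).
  exists (2^-1 *: (a + b)); first exact: convex_set_in_midpoint.
  apply: filterS (filterI aC bC) => k [xka xkb]; apply: mid => //; first lra.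
  have : eps' * (rho + eta) <= eps / (rho + 1) * (rho + 1).
    by apply: ler_pM => //; lra.
  by rewrite mulfVK; lra.
move=> /asymptotic_radiusR_le; nra.
Qed.

End AsymptoticRadius.

Lemma asymptotic_center_exists {R : realType} {U : completeNormedModType R}
    {Q : set U} {x : nat -> U} :
  uniformly_convex U -> convex_set_in Q -> closed Q ->
  asymptotic_bounds Q x !=set0 ->
  exists2 z, Q z & forall e, 0 < e -> almost_center Q x e z.
Proof.
move=> UC CV Qcl bounds_nonempty.
have /all_sig2 [y Qy yC] : forall k : nat,
    {y | Q y & almost_center Q x k.+1%:R^-1 y}.
  by move=> k; apply: cid2; apply: almost_center_exists.
have small e : 0 < e -> \forall k \near \oo, k.+1%:R^-1 <= e :> R.
  by move=> e0; apply: filterS (near_infty_natSinv_lt (PosNum e0)) => k /ltW.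
have yC_eventually e : 0 < e -> \forall k \near \oo, almost_center Q x e (y k).
  move=> e0; apply: filterS (small e e0) => k ke.
  exact: almost_center_le (yC k).
have y_cauchy : cauchy (y @ \oo).
  apply: cauchy_exP => e e0.
  have e2 : 0 < e / 2 by lra.
  have [eta eta0 close] := almost_centers_close _ _ bounds_nonempty _ UC CV e2.
  have [K _ KC] := yC_eventually eta eta0.
  exists (y K); exists K => // k /= Kk; rewrite -ball_normE /=.
  have := close _ _ (Qy K) (Qy k) (KC K (leqnn K)) (KC k Kk); lra.
have yz : y n @[n --> \oo] --> limn y by exact: cauchy_cvg.
exists (limn y).
  by apply: (closed_cvg _ Qcl _ _ yz); apply: nearW.
move=> e e0; have e2 : 0 < e / 2 by lra.
have [k [yk_z ykC]] :=
  filter_ex (filterI (cvgr_dist_le _ _ yz _ e2) (yC_eventually _ e2)).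
apply: filterS ykC => n xn_yk.
by have := ler_distD (y k) (x n) (limn y); rewrite [`|y k - _|]distrC; lra.
Qed.

Lemma fixed_point_of_approx {R : realType} {U : normedModType R}
    {Q : set U} {T : U -> U} {r b : R} : 0 < r -> 0 < b ->
  (forall p q, Q p -> Q q -> `|p - q| < r -> `|T p - T q| <= b * `|p - q|) ->
  forall p, Q p ->
  (forall e, 0 < e -> exists2 w, Q w & `|w - p| <= e /\ `|T w - p| <= e) ->
  T p = p.
Proof.
move=> r0 b0 lipT p Qp approx; apply/eqP; rewrite -subr_eq0 -normr_le0.
apply/ler_addgt0Pr => e e0; rewrite add0r.
set e' := Num.min (e / (b + 1)) (r / 2).
have e'0 : 0 < e' by rewrite lt_min !divr_gt0 //; lra.
have [e'_e e'_r] : e' <= e / (b + 1) /\ e' <= r / 2.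
  by rewrite !ge_min !lexx orbT.
have [w Qw [wp Twp]] := approx e' e'0.
have wp_r : `|w - p| < r by lra.
have Tp_Tw : `|T p - T w| <= b * e'.
  by rewrite distrC (le_trans (lipT w p Qw Qp wp_r)) // ler_pM2l.
have : e' * (b + 1) <= e by rewrite -ler_pdivlMr //; lra.
have := ler_distD (T w) (T p) p; lra.
Qed.

Section Orbit.
Context {R : realType} {U : normedModType R} {Q : set U} {T : U -> U}.
Context {r : R} {beta : nat -> R}.
Hypothesis T_stable : forall p, Q p -> Q (T p).
Hypothesis beta_gt0 : forall n, 0 < beta n.
Hypothesis iter_lipschitz : forall p q, Q p -> Q q -> `|p - q| < r ->
  forall n, (0 < n)%N -> `|iter n T p - iter n T q| <= beta n * `|p - q|.

Lemma iter_stable n p : Q p -> Q (iter n T p).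
Proof. by move=> Qp; elim: n => //= n; apply: T_stable. Qed.

Lemma orbit_dist_iter {q0 y : U} {c : R} {m : nat} :
  Q q0 -> Q y -> c < r -> (0 < m)%N ->
  (\forall n \near \oo, `|iter n T q0 - y| <= c) ->
  \forall n \near \oo, `|iter n T q0 - iter m T y| <= beta m * c.
Proof.
move=> Qq0 Qy cr m0 yc; apply: (near_infty_addn _ m).
apply: filterS yc => n nc.
rewrite addnC iterD; apply: le_trans (iter_lipschitz _ _ _ _ _ _ m0) _.
- exact: iter_stable.
- exact: Qy.
- exact: le_lt_trans cr.
- by rewrite ler_pM2l.
Qed.

Lemma iter_center_cvg {q0 z : U} : uniformly_convex U -> convex_set_in Q ->
  beta n @[n --> \oo] --> (1 : R) -> Q q0 -> Q z ->
  let x n := iter n T q0 in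
  asymptotic_bounds Q x !=set0 -> asymptotic_radiusR Q x < r ->
  (forall e, 0 < e -> almost_center Q x e z) ->
  iter m T z @[m --> \oo] --> z.
Proof.
move=> UC CV beta1 Qq0 Qz x bounds_nonempty rho_r zC.
set rho := asymptotic_radiusR Q x; have rho0 : 0 <= rho.
  exact: asymptotic_radiusR_ge0.
apply/cvgrPdist_le => e e0.
have [eta eta0 close] := almost_centers_close _ _ bounds_nonempty _ UC CV e0.
set e' := Num.min (eta / 2) ((r - rho) / 2).
have e'0 : 0 < e' by rewrite lt_min !divr_gt0 //; lra.
have [e'_eta e'_r] : e' <= eta / 2 /\ e' <= (r - rho) / 2.
  by rewrite !ge_min !lexx orbT.
set c := rho + e'.
have [c0 c_eta c_r] : [/\ 0 < c, c < rho + eta & c < r].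
  by rewrite /c; split; lra.
have : 1 < (rho + eta) / c by rewrite ltr_pdivlMr // mul1r.
move=> /(cvgr_le _ beta1) beta_small; near=> m.
apply: (close _ _ Qz (iter_stable m _ Qz) (zC _ eta0)); rewrite /almost_center.
have m0 : (0 < m)%N by near: m; exists 1%N.
apply: filterS (orbit_dist_iter Qq0 Qz c_r m0 (zC _ e'0)) => n /le_trans.
apply; rewrite -ler_pdivlMr //; near: m; exact: beta_small.
Unshelve. all: by end_near.
Qed.

End Orbit.

Theorem mainTheorem1 (R : realType) (U : completeNormedModType R)
  (Q : set U) (r : R) (beta : nat -> R) (T : U -> U) :
  uniformly_convex U ->
  Q !=set0 -> bounded_set_norm Q -> closed Q -> convex_set_in Q ->
  0 < r ->
  (forall n, 0 < beta n) -> beta n @[n --> \oo] --> (1 : R) ->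
  (forall p, Q p -> Q (T p)) ->
  (forall p q, Q p -> Q q -> `|p - q| < r ->
     forall n, (0 < n)%N -> `|iter n T p - iter n T q| <= beta n * `|p - q|) ->
  (exists2 q0, Q q0 & (asymptotic_radius Q (fun n => iter n T q0) < r%:E)%E) ->
  (exists2 x, Q x & T x = x) /\ closed [set x | Q x /\ T x = x].
Proof.
move=> UC _ _ Qcl CV r0 beta0 beta1 TQ lip [q0 Qq0 rad_r].
have lipT p q : Q p -> Q q -> `|p - q| < r -> `|T p - T q| <= beta 1 * `|p - q|.
  by move=> Qp Qq pq; exact: (lip p q Qp Qq pq 1%N).
have fixedP := fixed_point_of_approx r0 (beta0 1%N) lipT.
split.
  have [c c_bound c_r] := asymptotic_radius_lt _ _ _ rad_r.
  have bounds_nonempty : asymptotic_bounds Q (fun n => iter n T q0) !=set0.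
    by exists c.
  have [z Qz zC] := asymptotic_center_exists UC CV Qcl bounds_nonempty.
  have rho_r := le_lt_trans (asymptotic_radiusR_le _ _ _ c_bound) c_r.
  have Tz :=
    iter_center_cvg TQ beta0 lip UC CV beta1 Qq0 Qz bounds_nonempty rho_r zC.
  exists z => //; apply: fixedP => // e e0.
  have [N _ zN] := cvgr_dist_le _ _ Tz _ e0.
  exists (iter N T z); first exact: iter_stable.
  by rewrite -iterS !(distrC _ z); split; apply: zN => /=.
move=> p p_cl; have Qp : Q p by apply: Qcl; apply: closureS p_cl => w [].
split => //; apply: fixedP => // e e0.
have [w [[Qw Tw] pw]] := p_cl _ (nbhsx_ballx p e e0).
by exists w => //; rewrite Tw; move: pw; rewrite -ball_normE /= distrC => /ltW.
Qed.
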